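(* There exist an environment $E$ and a total preorder $\succeq$ on $\Pi^E$ such that $\succeq\in\mathrm{Ord}_{\mathrm{RRL}}(E)$ but $\succeq\notin\mathrm{Ord}_{\mathrm{ONMR}}(E)$.
   Context: An environment is a tuple $E=(\mathcal S,\mathcal A,\mathcal T,\mathcal I)$ where $\mathcal S,\mathcal A$ are finite nonempty sets, $\mathcal T:\mathcal S\times\mathcal A\to\Delta(\mathcal S)$ and $\mathcal I\in\Delta(\mathcal S)$. A policy is a map $\pi:\mathcal S\to\Delta(\mathcal A)$ (stationary, possibly stochastic); $\Pi^E$ denotes the set of all policies. A trajectory $\xi=(s_0,a_0,s_1,a_1,\dots)$ is generated under $\pi$ by $s_0\sim\mathcal I$, $a_t\sim\pi(s_t)$, $s_{t+1}\sim\mathcal T(s_t,a_t)$; $\mathbb E^\pi_\xi$ denotes expectation under this distribution. An objective-specification formalism $X$ assigns to each environment $E$ a set of objective specifications, each inducing a total preorder $\succeq$ on $\Pi^E$; $\mathrm{Ord}_X(E)$ is the set of total preorders so induced. A specification defining a scalar $J:\Pi^E\to\mathbb R$ induces $\pi_1\succeq\pi_2\iff J(\pi_1)\ge J(\pi_2)$. RRL: specification $(\mathcal R,\alpha,F,\gamma)$ with $\mathcal R:\mathcal S\times\mathcal A\times\mathcal S\to\mathbb R$, $\alpha\in\mathbb R$, $F:\Delta(\mathcal A)\to\mathbb R$, $\gamma\in[0,1)$; $J(\pi)=\mathbb E^\pi_\xi[\sum_{t=0}^\infty\gamma^t(\mathcal R(s_t,a_t,s_{t+1})-\alpha F(\pi(s_t)))]$.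 ONMR: specification $(\mathcal R,f,\gamma)$ with $\mathcal R:\mathcal S\times\mathcal A\times\mathcal S\to\mathbb R$, $f:\mathbb R\to\mathbb R$, $\gamma\in[0,1)$; $J(\pi)=f\big(\mathbb E^\pi_\xi[\sum_{t=0}^\infty\gamma^t\mathcal R(s_t,a_t,s_{t+1})]\big)$. *)

From mathcomp Require Import all_boot all_order all_algebra.
From mathcomp Require Import all_classical all_reals all_analysis.
Set Implicit Arguments. Unset Strict Implicit. Unset Printing Implicit Defensive.
Import Order.TTheory GRing.Theory Num.Theory.
Local Open Scope ring_scope.

Section Defs.
Variable R : realType.

Record dist (X : finType) := Dist {
  dfun :> {ffun X -> R};
  dist_ge0 : forall x, 0 <= dfun x;
  dist_sum1 : \sum_(x : X) dfun x = 1 }.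

Record env := Env {
  St : finType;
  Ac : finType;
  St_nonempty : (0 < #|St|)%N;
  Ac_nonempty : (0 < #|Ac|)%N;
  Tr : St -> Ac -> dist St;
  Init : dist St }.

Definition policy (E : env) := St E -> dist (Ac E).

Fixpoint occ (E : env) (pi : policy E) (t : nat) : St E -> R :=
  match t with
  | O => fun s => Init E s
  | t'.+1 => fun s' => \sum_(s : St E) \sum_(a : Ac E)
                occ pi t' s * pi s a * Tr s a s'
  end.

Definition exp_reward (E : env) (Rw : St E -> Ac E -> St E -> R)
  (pi : policy E) (t : nat) : R :=
  \sum_(s : St E) \sum_(a : Ac E) \sum_(s' : St E)
     occ pi t s * pi s a * Tr s a s' * Rw s a s'.

Definition exp_reg (E : env) (F : dist (Ac E) -> R) (pi : policy E) (t : nat) : R :=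
  \sum_(s : St E) occ pi t s * F (pi s).

(* Infinite sums are limits of partial sums (limn); they converge since
   gamma < 1 and all terms are bounded. *)
Definition J_RRL (E : env) (Rw : St E -> Ac E -> St E -> R) (alpha : R)
  (F : dist (Ac E) -> R) (gamma : R) (pi : policy E) : R :=
  limn (fun n => \sum_(0 <= t < n) gamma ^+ t * (exp_reward Rw pi t - alpha * exp_reg F pi t)).

Definition J_ONMR (E : env) (Rw : St E -> Ac E -> St E -> R) (f : R -> R)
  (gamma : R) (pi : policy E) : R :=
  f (limn (fun n => \sum_(0 <= t < n) gamma ^+ t * exp_reward Rw pi t)).

Definition induced_by (E : env) (J : policy E -> R)
  (ord : policy E -> policy E -> Prop) : Prop :=
  forall p1 p2, ord p1 p2 <-> J p2 <= J p1.

Definition total_preorder (E : env) (ord : policy E -> policy E -> Prop) : Prop :=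
  (forall p, ord p p) /\
  (forall p q r, ord p q -> ord q r -> ord p r) /\
  (forall p q, ord p q \/ ord q p).

Definition in_Ord_RRL (E : env) (ord : policy E -> policy E -> Prop) : Prop :=
  exists (Rw : St E -> Ac E -> St E -> R) (alpha : R) (F : dist (Ac E) -> R) (gamma : R),
    0 <= gamma < 1 /\ induced_by (J_RRL Rw alpha F gamma) ord.

Definition in_Ord_ONMR (E : env) (ord : policy E -> policy E -> Prop) : Prop :=
  exists (Rw : St E -> Ac E -> St E -> R) (f : R -> R) (gamma : R),
    0 <= gamma < 1 /\ induced_by (J_ONMR Rw f gamma) ord.

End Defs.

From mathcomp Require Import all_boot all_order all_algebra.
From mathcomp Require Import all_classical all_reals all_analysis.
From mathcomp Require Import ring lra.
Import Order.TTheory GRing.Theory Num.Theory.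
Local Open Scope ring_scope.
Set Implicit Arguments. Unset Strict Implicit.

(* On a one-state bandit with three arms, the RRL objective with zero reward,
   regulariser [F d = sum_a d a ^ 2] and discount 0 ranks policies by the
   squared norm of their action distribution. An ONMR objective only sees the
   expected reward, a linear function of that distribution. Moving the uniform
   distribution along a direction orthogonal both to (1,1,1) and to the reward
   vector keeps the expected reward but strictly increases the squared norm, so
   every ONMR objective ties two policies that the RRL order separates. *)

Section Objectives.
Variables (R : realType) (E : env R).

Lemma J_RRL_discount0 (Rw : St E -> Ac E -> St E -> R) alpha F (pi : policy E) :
  J_RRL Rw alpha F 0 pi = exp_reward Rw pi 0 - alpha * exp_reg F pi 0.
Proof.
apply: norm_lim_near_cst; near=> n.
have n_gt0 : (0 < n)%N by near: n; exact: nbhs_infty_gt.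
rewrite -(prednK n_gt0) big_nat_recl // expr0 mul1r big1 ?addr0 // => t _.
by rewrite expr0n mul0r.
Unshelve. all: end_near.
Qed.

Lemma J_ONMR_exp_reward_eq (Rw : St E -> Ac E -> St E -> R) f gamma (p1 p2 : policy E) :
  (forall t, exp_reward Rw p1 t = exp_reward Rw p2 t) ->
  J_ONMR Rw f gamma p1 = J_ONMR Rw f gamma p2.
Proof.
move=> eq_rew; rewrite /J_ONMR.
by under eq_fun do under eq_bigr do rewrite eq_rew.
Qed.

Lemma induced_by_total_preorder (J : policy E -> R) ord :
  induced_by J ord -> total_preorder ord.
Proof.
move=> ordJ; split; [|split] => [p|p q r|p q]; rewrite ?ordJ.
- exact: lexx.
- by move=> qp rq; apply: le_trans rq qp.
- by case: (leP (J p) (J q)) => [|/ltW]; [right|left].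
Qed.

End Objectives.

Section Dirac.
Variables (R : realType) (X : finType) (x0 : X).

Definition dirac_fun : {ffun X -> R} := [ffun x => (x == x0)%:R].

Lemma dirac_fun_ge0 x : 0 <= dirac_fun x.
Proof. by rewrite ffunE ler0n. Qed.

Lemma dirac_fun_sum1 : \sum_x dirac_fun x = 1.
Proof. by rewrite (bigD1 x0) //= ffunE eqxx big1 ?addr0 // => x /negbTE; rewrite ffunE => ->. Qed.

Definition dirac : dist R X := Dist dirac_fun_ge0 dirac_fun_sum1.

End Dirac.

Section Bandit.
Variables (R : realType) (A : finType) (A_nonempty : (0 < #|A|)%N).

Lemma sum_unit (F : unit -> R) : \sum_(s : unit) F s = F tt.
Proof. by rewrite (big_pred1 tt) // => -[]. Qed.

Lemma card_unit_gt0 : (0 < #|{: unit}|)%N.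
Proof. by rewrite card_unit. Qed.

Definition bandit : env R :=
  Env card_unit_gt0 A_nonempty (fun _ _ => dirac R tt) (dirac R tt).

Definition mean_reward (Rw : unit -> A -> unit -> R) (d : dist R A) : R :=
  \sum_a d a * Rw tt a tt.

Definition sqnorm (d : dist R A) : R := \sum_a d a ^+ 2.

Lemma occ_bandit (pi : policy bandit) t s : occ pi t s = 1.
Proof.
case: s; elim: t => [|t IH] /=; first by rewrite ffunE.
rewrite sum_unit IH -[RHS](dist_sum1 (pi tt)); apply: eq_bigr => a _.
by rewrite ffunE mul1r mulr1.
Qed.

Lemma exp_reward_bandit Rw (pi : policy bandit) t :
  exp_reward Rw pi t = mean_reward Rw (pi tt).
Proof.
rewrite /exp_reward sum_unit; apply: eq_bigr => a _.
by rewrite sum_unit occ_bandit ffunE mul1r mulr1.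
Qed.

Lemma exp_reg_bandit F (pi : policy bandit) t : exp_reg F pi t = F (pi tt).
Proof. rewrite /exp_reg sum_unit occ_bandit; exact: mul1r. Qed.

Definition prefer_low_sqnorm (p1 p2 : policy bandit) : Prop :=
  sqnorm (p1 tt) <= sqnorm (p2 tt).

Lemma prefer_low_sqnorm_induced :
  induced_by (@J_RRL R bandit (fun _ _ _ => 0) 1 sqnorm 0) prefer_low_sqnorm.
Proof.
move=> p1 p2; rewrite !J_RRL_discount0 !exp_reward_bandit !exp_reg_bandit.
by rewrite /mean_reward !big1 ?sub0r ?mul1r ?lerN2 // => a _; rewrite mulr0.
Qed.

Lemma in_Ord_ONMR_bandit_ties ord : in_Ord_ONMR ord ->
  exists Rw, forall p1 p2 : policy bandit,
    mean_reward Rw (p1 tt) = mean_reward Rw (p2 tt) -> ord p1 p2.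
Proof.
move=> [Rw [f [gamma [_ ordJ]]]]; exists Rw => p1 p2 eq_mean.
rewrite ordJ (@J_ONMR_exp_reward_eq _ _ _ _ _ p1 p2) // => t.
by rewrite !exp_reward_bandit.
Qed.

End Bandit.

Section Simplex3.
Variable R : realFieldType.

Lemma exists_orthogonal3 (r0 r1 r2 : R) : exists v0 v1 v2 : R,
  [/\ v0 + v1 + v2 = 0, v0 * r0 + v1 * r1 + v2 * r2 = 0
    & 0 < v0 ^+ 2 + v1 ^+ 2 + v2 ^+ 2].
Proof.
have [/andP[/eqP r01 /eqP r12] | /nandP r_neq] := boolP ((r0 == r1) && (r1 == r2)).
  exists 1, (-1), 0; split; rewrite ?r01 ?r12; [ring | ring | lra].
exists (r1 - r2), (r2 - r0), (r0 - r1); split; [ring | ring |].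
have sq_gt0 (x y : R) : x != y -> 0 < (x - y) ^+ 2.
  by move=> xy; rewrite exprn_even_gt0 //= subr_eq0 xy.
have := sqr_ge0 (r1 - r2); have := sqr_ge0 (r2 - r0); have := sqr_ge0 (r0 - r1).
by case: r_neq => /sq_gt0; lra.
Qed.

Lemma exists_simplex3_tie_uniform (r0 r1 r2 : R) : exists x0 x1 x2 : R,
  [/\ [/\ 0 <= x0, 0 <= x1 & 0 <= x2], x0 + x1 + x2 = 1,
    x0 * r0 + x1 * r1 + x2 * r2 = (r0 + r1 + r2) / 3
    & 1 / 3 < x0 ^+ 2 + x1 ^+ 2 + x2 ^+ 2].
Proof.
have [v0 [v1 [v2 [sum_v0 dot_v0 S_gt0]]]] := exists_orthogonal3 r0 r1 r2.
set S := _ + _ + _ in S_gt0.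
have S_def : v0 ^+ 2 + v1 ^+ 2 + v2 ^+ 2 = S by [].
(* keep [S] opaque, so that [field] only needs [1 + S != 0] *)
clearbody S.
pose k := 3 * (1 + S); have k_gt0 : 0 < k by rewrite /k; lra.
(* [x v = 1/3 + v / k]: the uniform distribution shifted along [v] *)
pose x v := (1 + S + v) / k.
have x_ge0 v : v ^+ 2 <= S -> 0 <= x v by move=> vS; rewrite divr_ge0 ?ltW //; nra.
have := sqr_ge0 v0; have := sqr_ge0 v1; have := sqr_ge0 v2 => *.
exists (x v0), (x v1), (x v2); split.
- by split; apply: x_ge0; lra.
- have -> : x v0 + x v1 + x v2 = 1 + (v0 + v1 + v2) / k by rewrite /x /k; field; lra.
  by rewrite sum_v0 mul0r addr0.
- have -> : x v0 * r0 + x v1 * r1 + x v2 * r2 =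
      (r0 + r1 + r2) / 3 + (v0 * r0 + v1 * r1 + v2 * r2) / k.
    by rewrite /x /k; field; lra.
  by rewrite dot_v0 mul0r addr0.
- have -> : x v0 ^+ 2 + x v1 ^+ 2 + x v2 ^+ 2 =
      1 / 3 + (2 * (1 + S) * (v0 + v1 + v2) + (v0 ^+ 2 + v1 ^+ 2 + v2 ^+ 2)) / k ^+ 2.
    by rewrite /x /k; field; lra.
  rewrite sum_v0 S_def mulr0 add0r.
  suff : 0 < S / k ^+ 2 by lra.
  by rewrite divr_gt0 // exprn_gt0.
Qed.
End Simplex3.

Section Uniform.
Variables (R : realType) (X : finType) (X_nonempty : (0 < #|X|)%N).

Definition uniform_fun : {ffun X -> R} := [ffun=> #|X|%:R^-1].

Lemma uniform_fun_ge0 x : 0 <= uniform_fun x.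
Proof. by rewrite ffunE invr_ge0 ler0n. Qed.

Lemma uniform_fun_sum1 : \sum_x uniform_fun x = 1.
Proof.
under eq_bigr do rewrite ffunE.
by rewrite sumr_const -[_ *+ _]mulr_natr mulVf // pnatr_eq0 -lt0n.
Qed.

Definition uniform : dist R X := Dist uniform_fun_ge0 uniform_fun_sum1.

End Uniform.

Section ThreeArms.
Variable R : realType.

Lemma card_ord3_gt0 : (0 < #|'I_3|)%N.
Proof. by rewrite card_ord. Qed.

Lemma sum_ord3 (F : 'I_3 -> R) :
  \sum_i F i = F (inord 0) + F (inord 1) + F (inord 2).
Proof.
rewrite !big_ord_recl big_ord0 addr0 addrA.
by congr (F _ + F _ + F _); apply: val_inj; rewrite /= inordK.
Qed.

Lemma exists_dist3 (x0 x1 x2 : R) :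
  [/\ 0 <= x0, 0 <= x1 & 0 <= x2] -> x0 + x1 + x2 = 1 ->
  exists d : dist R 'I_3, [/\ d (inord 0) = x0, d (inord 1) = x1 & d (inord 2) = x2].
Proof.
pose f : {ffun 'I_3 -> R} := [ffun i : 'I_3 => [:: x0; x1; x2]`_i].
have fE : [/\ f (inord 0) = x0, f (inord 1) = x1 & f (inord 2) = x2].
  by split; rewrite ffunE inordK.
case: fE => f0 f1 f2 [x0_ge0 x1_ge0 x2_ge0] sum1.
have f_ge0 i : 0 <= f i by rewrite ffunE; case: i => [[|[|[|?]]] ?].
have f_sum1 : \sum_i f i = 1 by rewrite sum_ord3 f0 f1 f2.
by exists (Dist f_ge0 f_sum1).
Qed.

Lemma exists_reward_tie_sqnorm_gt_uniform (Rw : unit -> 'I_3 -> unit -> R) :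
  exists d : dist R 'I_3,
    mean_reward Rw d = mean_reward Rw (uniform R card_ord3_gt0) /\
    sqnorm (uniform R card_ord3_gt0) < sqnorm d.
Proof.
have uE i : uniform R card_ord3_gt0 i = 1 / 3 by rewrite ffunE card_ord div1r.
have [x0 [x1 [x2 [x_ge0 x_sum1 x_mean x_sqnorm]]]] :=
  exists_simplex3_tie_uniform (Rw tt (inord 0) tt) (Rw tt (inord 1) tt) (Rw tt (inord 2) tt).
have [d [d0 d1 d2]] := exists_dist3 x_ge0 x_sum1.
exists d; rewrite /mean_reward /sqnorm !sum_ord3 !uE d0 d1 d2 x_mean; split.
  by field.
suff -> : (1 / 3) ^+ 2 + (1 / 3) ^+ 2 + (1 / 3) ^+ 2 = 1 / 3 :> R by [].
by field.
Qed.

End ThreeArms.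

Theorem mainTheorem18 (R : realType) :
  exists (E : env R) (ord : policy E -> policy E -> Prop),
    total_preorder ord /\ in_Ord_RRL ord /\ ~ in_Ord_ONMR ord.
Proof.
exists (bandit R card_ord3_gt0), (@prefer_low_sqnorm R _ card_ord3_gt0).
have ordJ := @prefer_low_sqnorm_induced R _ card_ord3_gt0.
split; [exact: induced_by_total_preorder ordJ | split].
  by exists (fun _ _ _ => 0), 1, (@sqnorm R _), 0; rewrite lexx ltr01.
move=> /in_Ord_ONMR_bandit_ties [Rw tie].
have [d [mean_eq sqnorm_lt]] := exists_reward_tie_sqnorm_gt_uniform Rw.
have := tie (fun _ => d) (fun _ => uniform R card_ord3_gt0) mean_eq.
by rewrite /prefer_low_sqnorm leNgt sqnorm_lt.
Qed.
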